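(* For a topological space $(X,\tau)$ the following are equivalent: (1) for every compact subset $F$ of $X$ and every $y\notin F$ there exists a set $A_y$ with $F\subseteq A_y$ and $y\notin A_y$ such that $A_y$ is either open or closed; (2) $X$ is $T_{\frac13}$, i.e. every compact subset of $X$ is $\lambda$-closed.
   Context: A $\Lambda$-set is an intersection of a family of open sets. A set $A$ is $\lambda$-closed if $A=L\cap C$ with $L$ a $\Lambda$-set and $C$ closed. *)

From HB Require Import structures.
From mathcomp Require Import all_boot all_order all_algebra.
From mathcomp Require Import all_classical all_reals all_analysis.
Set Implicit Arguments. Unset Strict Implicit. Unset Printing Implicit Defensive.
Local Open Scope classical_set_scope.

Definition Lambda_set (T : topologicalType) (L : set T) : Prop :=
  exists Fam : set (set T),
    (forall U, Fam U -> open U) /\ L = \bigcap_(U in Fam) U.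

Definition lambda_closed (T : topologicalType) (A : set T) : Prop :=
  exists L C : set T, Lambda_set L /\ closed C /\ A = L `&` C.

Definition T_one_third (T : topologicalType) : Prop :=
  forall F : set T, compact F -> lambda_closed F.

From HB Require Import structures.
From mathcomp Require Import all_boot all_order all_algebra.
From mathcomp Require Import all_classical all_reals all_analysis.
Local Open Scope classical_set_scope.

(* A set A is lambda-closed exactly when every point outside A is excluded by
   an open or a closed superset of A: then A is the intersection of its
   Lambda-kernel (the intersection of all open supersets) with its closure. *)

Section LambdaClosed.
Context {T : topologicalType}.

Definition lambda_kernel (A : set T) : set T :=
  \bigcap_(U in [set U : set T | open U /\ A `<=` U]) U.

Lemma Lambda_set_kernel (A : set T) : Lambda_set (lambda_kernel A).
Proof. by exists [set U : set T | open U /\ A `<=` U]; split => // U []. Qed.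

Lemma sub_lambda_kernel (A : set T) : A `<=` lambda_kernel A.
Proof. by move=> x Ax U [_ AU]; apply: AU. Qed.

Lemma lambda_closedP (A : set T) :
  lambda_closed A <->
  (forall y, ~ A y -> exists B : set T, A `<=` B /\ ~ B y /\ (open B \/ closed B)).
Proof.
split=> [[L [C [[Fam [oFam ->]] [cC ->]]]] y nAy | sepA].
- have [Cy | nCy] := pselect (C y); last first.
    by exists C; split=> [x []|]; last by split=> //; right.
  have [U FamU nUy] : exists2 U, Fam U & ~ U y.
    apply/not_notP => nU; apply: nAy; split=> // U FamU.
    by apply/not_notP => nUy; apply: nU; exists U.
  by exists U; split=> [x [Lx _]|]; [apply: Lx | split=> //; left; apply: oFam].
- exists (lambda_kernel A), (closure A).
  split; first exact: Lambda_set_kernel.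
  split; first exact: closed_closure.
  apply/seteqP; split=> [x Ax | x [Kx clAx]].
    by split; [apply: sub_lambda_kernel | apply: subset_closure].
  apply/not_notP => nAx; have [B [AB [nBx [oB | cB]]]] := sepA x nAx.
    by apply: nBx; apply: Kx.
  by apply: nBx; move: clAx; rewrite closureE; apply: smallest_sub.
Qed.

End LambdaClosed.

Theorem mainTheorem9 (T : topologicalType) :
  (forall (F : set T) (y : T), compact F -> ~ F y ->
     exists A : set T, F `<=` A /\ ~ A y /\ (open A \/ closed A))
  <-> T_one_third T.
Proof.
split=> [sep F cF | T13 F y cF].
- by apply/lambda_closedP => y; apply: sep.
- exact: (lambda_closedP F).1 (T13 F cF) y.
Qed.
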